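(* Let $L\ge 2$ and let $M_1,\dots,M_L$ be pairwise distinct positive integers. Let $N$ be an integer with $0\le N<\operatorname{lcm}(M_1,\dots,M_L)$, and for $1\le i\le L$ let $r_i\in\{0,\dots,M_i-1\}$ be the remainder of $N$ modulo $M_i$ and $n_i=(N-r_i)/M_i$ the corresponding folding number. Let $\tilde r_1,\dots,\tilde r_L$ be integers with $0\le\tilde r_i\le M_i-1$ (erroneous remainders) and put $\Delta r_i=\tilde r_i-r_i$. Run the single-stage algorithm (described in the context) on the moduli $M_1,\dots,M_L$ with reference index $k=1$ and inputs $\tilde r_1,\dots,\tilde r_L$, producing $\hat n_1,\dots,\hat n_L$. Then $\hat n_i=n_i$ for all $1\le i\le L$ if and only if $$-\frac{\gcd(M_1,M_i)}{2}\le \Delta r_i-\Delta r_1<\frac{\gcd(M_1,M_i)}{2}\quad\text{for all }2\le i\le L.$$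
   Context: For $x\in\mathbb R$, $[x]$ denotes the unique integer with $-1/2\le x-[x]<1/2$. Single-stage algorithm: let $P_1,\dots,P_m$ ($m\ge2$) be pairwise distinct positive integers, $k\in\{1,\dots,m\}$ a reference index, and $x_1,\dots,x_m$ integers. For each $i\ne k$ put $m_{ki}=\gcd(P_k,P_i)$, $\Gamma_{ki}=P_k/m_{ki}$, $\Gamma_{ik}=P_i/m_{ki}$, $\hat q_{ik}=[(x_i-x_k)/m_{ki}]$; let $\bar\Gamma_{ki}$ be a multiplicative inverse of $\Gamma_{ki}$ modulo $\Gamma_{ik}$, and let $\hat\xi_{ik}\in\{0,\dots,\Gamma_{ik}-1\}$ with $\hat\xi_{ik}\equiv\hat q_{ik}\bar\Gamma_{ki}\pmod{\Gamma_{ik}}$. Let $\hat n_k$ be the least nonnegative integer $y$ with $y\equiv\hat\xi_{ik}\pmod{\Gamma_{ik}}$ for all $i\ne k$ (if no such $y$ exists the algorithm fails and its outputs are regarded as not equal to any target values). For $i\ne k$ set $\hat n_i=(\hat n_k\Gamma_{ki}-\hat q_{ik})/\Gamma_{ik}$. Outputs: $\hat n_1,\dots,\hat n_m$ and the estimate $[\frac1m\sum_{i=1}^m(\hat n_iP_i+x_i)]$. *)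

From mathcomp Require Import all_boot all_order all_algebra.
Set Implicit Arguments. Unset Strict Implicit. Unset Printing Implicit Defensive.
Import Order.TTheory GRing.Theory Num.Theory.
Local Open Scope ring_scope.

(* [x] : the unique integer with -1/2 <= x - [x] < 1/2, i.e. floor (x + 1/2). *)
Definition rnd (x : rat) : int := Num.floor (x + 1 / 2).

(* Single-stage algorithm.  Indices are 0..m-1 (paper: 1..m); P, x : nat -> _.
   k is the reference index. *)
Section Alg.
Variables (P : nat -> nat) (x : nat -> int) (k : nat).

Definition m_ki (i : nat) : nat := gcdn (P k) (P i).
Definition G_ki (i : nat) : nat := (P k %/ m_ki i)%N.
Definition G_ik (i : nat) : nat := (P i %/ m_ki i)%N.
Definition qhat (i : nat) : int := rnd ((x i - x k)%:~R / (m_ki i)%:R).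
(* a multiplicative inverse of G_ki modulo G_ik (Bezout coefficient) *)
Definition Gbar_ki (i : nat) : int := (egcdz (G_ki i) (G_ik i)).1.
Definition xihat (i : nat) : int := ((qhat i * Gbar_ki i) %% (G_ik i)%:Z)%Z.

Definition crt_sol (m : nat) (y : nat) : Prop :=
  forall i, (i < m)%N -> i != k -> (y%:Z = xihat i %[mod (G_ik i)%:Z])%Z.

Definition least_sol (m : nat) (y : nat) : Prop :=
  crt_sol m y /\ forall y', crt_sol m y' -> (y <= y')%N.

Definition alg_outputs_eq (m : nat) (n : nat -> int) : Prop :=
  exists y : nat, least_sol m y /\ n k = y%:Z /\
    forall i, (i < m)%N -> i != k ->
      (n i)%:~R = ((y%:Z * (G_ki i)%:Z - qhat i)%:~R / (G_ik i)%:R : rat).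
End Alg.

From mathcomp Require Import all_boot all_order all_algebra zify ring lra.
Import Order.TTheory GRing.Theory Num.Theory.
Local Open Scope ring_scope.

(* Write N = a_k P_k + r_k = a_i P_i + r_i and g = gcd(P_k, P_i), so that
   P_k = G_ki g and P_i = G_ik g.  Then r_i - r_k = (a_k G_ki - a_i G_ik) g
   exactly, hence the rounded quotient qhat_ik = [(x_i - x_k) / g] is the integer
   a_k G_ki - a_i G_ik iff the error difference Dr_i - Dr_k lies in [-g/2, g/2).
   Conversely the outputs nhat force qhat_ik = nhat_k G_ki - nhat_i G_ik.  When
   every qhat_ik is exact, a_k solves all congruences y = xihat_ik (mod G_ik)
   since Gbar_ki inverts G_ki; any smaller solution y' would make (a_k - y') P_k
   a positive multiple of every P_i, hence of their lcm, which is impossible as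
   a_k P_k <= N < lcm. *)

Lemma rnd_intrD (q : int) (t : rat) :
  rnd (q%:~R + t) = q <-> - (1 / 2) <= t < 1 / 2.
Proof.
rewrite /rnd -addrA; split => [/eqP | ht].
- by rewrite floor_eq intrD /=; lra.
- by apply/eqP; rewrite floor_eq intrD /=; lra.
Qed.

Lemma rnd_intrD_div (q d : int) (g : nat) : (0 < g)%N ->
  rnd (q%:~R + d%:~R / g%:R) = q <->
  - (g%:R / 2) <= d%:~R :> rat /\ d%:~R < g%:R / 2 :> rat.
Proof.
move=> g_gt0; have gP : 0 < g%:R :> rat by rewrite ltr0n.
rewrite rnd_intrD ler_pdivlMr // ltr_pdivrMr //.
by split => [/andP[] | []]; [split | move=> *; apply/andP; split]; lra.
Qed.

Section Cofactors.
Variables (P : nat -> nat) (k i : nat).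
Hypothesis Pk_gt0 : (0 < P k)%N.

Lemma m_ki_gt0 : (0 < m_ki P k i)%N.
Proof. by rewrite gcdn_gt0 Pk_gt0. Qed.

Lemma G_kiK : (G_ki P k i * m_ki P k i)%N = P k.
Proof. exact/divnK/dvdn_gcdl. Qed.

Lemma G_ikK : (G_ik P k i * m_ki P k i)%N = P i.
Proof. exact/divnK/dvdn_gcdr. Qed.

Lemma G_ik_gt0 : (0 < P i)%N -> (0 < G_ik P k i)%N.
Proof. by rewrite -G_ikK muln_gt0 => /andP[]. Qed.

Lemma coprime_G : coprime (G_ki P k i) (G_ik P k i).
Proof.
have g_gt0 := m_ki_gt0.
have : (gcdn (G_ki P k i) (G_ik P k i) * m_ki P k i)%N = (1 * m_ki P k i)%N.
  by rewrite muln_gcdl G_kiK G_ikK mul1n.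
by move/eqP; rewrite eqn_mul2r eqn0Ngt g_gt0.
Qed.

Lemma Gbar_kiP : ((G_ki P k i)%:Z * Gbar_ki P k i = 1 %[mod (G_ik P k i)%:Z])%Z.
Proof.
rewrite /Gbar_ki; case: egcdzP => u v; rewrite /gcdz /= (eqP coprime_G) /= => uv _.
apply/eqP; rewrite eqz_mod_dvd; apply/dvdzP; exists (- v).
by move: uv; lia.
Qed.

Lemma xihat_fold_diff (x : nat -> int) (a b : int) :
  qhat P x k i = a * (G_ki P k i)%:Z - b * (G_ik P k i)%:Z ->
  (a = xihat P x k i %[mod (G_ik P k i)%:Z])%Z.
Proof.
move=> qE; have /eqP := Gbar_kiP; rewrite eqz_mod_dvd => /dvdzP[c cE].
rewrite /xihat modz_mod qE; apply/eqP; rewrite eqz_mod_dvd; apply/dvdzP.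
exists (b * Gbar_ki P k i - a * c).
have -> : a - (a * (G_ki P k i)%:Z - b * (G_ik P k i)%:Z) * Gbar_ki P k i =
  - a * ((G_ki P k i)%:Z * Gbar_ki P k i - 1) + b * Gbar_ki P k i * (G_ik P k i)%:Z
  by ring.
by rewrite cE; ring.
Qed.
End Cofactors.

Section FoldingNumbers.
Variables (P : nat -> nat) (N k i : nat).
Hypothesis Pk_gt0 : (0 < P k)%N.

Lemma modn_sub_fold :
  (N %% P i)%:Z - (N %% P k)%:Z =
  ((N %/ P k)%:Z * (G_ki P k i)%:Z - (N %/ P i)%:Z * (G_ik P k i)%:Z)
    * (m_ki P k i)%:Z.
Proof.
have := divn_eq N (P k); have := divn_eq N (P i).
move: (N %/ P k)%N (N %/ P i)%N (N %% P k)%N (N %% P i)%N => a b rk ri Ni Nk.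
rewrite -(G_kiK P k i) in Nk; rewrite -(G_ikK P k i) in Ni.
move: (G_ki P k i) (G_ik P k i) (m_ki P k i) Nk Ni => Gk Gi g; lia.
Qed.

Lemma qhat_fold_diffP (rt : nat -> nat) :
  qhat P (fun j => (rt j)%:Z) k i =
    (N %/ P k)%:Z * (G_ki P k i)%:Z - (N %/ P i)%:Z * (G_ik P k i)%:Z <->
  let dr := ((rt i)%:Z - (N %% P i)%:Z) - ((rt k)%:Z - (N %% P k)%:Z) in
  - ((m_ki P k i)%:R / 2) <= dr%:~R :> rat /\ dr%:~R < (m_ki P k i)%:R / 2 :> rat.
Proof.
set q := _ - _; set dr := (_ - _ - (_ - _)).
have g_gt0 : (0 < m_ki P k i)%N := m_ki_gt0 P k i Pk_gt0.
rewrite /qhat /=.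
have -> : (rt i)%:Z - (rt k)%:Z = q * (m_ki P k i)%:Z + dr.
  by rewrite /q -modn_sub_fold /dr; ring.
rewrite intrD intrM mulrDl mulfK ?pnatr_eq0 -?lt0n //.
exact: rnd_intrD_div.
Qed.
End FoldingNumbers.

Section LeastSolution.
Variables (P : nat -> nat) (x : nat -> int) (k L : nat).
Hypothesis Pk_gt0 : (0 < P k)%N.

Lemma crt_sol_sub_dvd {y y' : nat} :
  crt_sol P x k L y -> crt_sol P x k L y' -> (y' <= y)%N ->
  (\big[lcmn/1%N]_(i < L) P i %| (y - y') * P k)%N.
Proof.
move=> sol_y sol_y' le_y'y; apply/dvdn_biglcmP => i _.
have [-> | ne_ik] := eqVneq (nat_of_ord i) k; first exact: dvdn_mull.
have : (y%:Z = y'%:Z %[mod (G_ik P k i)%:Z])%Z.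
  by rewrite (sol_y i) ?(sol_y' i).
move/eqP; rewrite eqz_mod_dvd subzn // => dvd_G.
rewrite -(G_kiK P k i) -(G_ikK P k i) mulnA.
by apply: dvdn_mul => //; apply: dvdn_mulr.
Qed.

Lemma crt_sol_least (y : nat) :
  crt_sol P x k L y -> (y * P k < \big[lcmn/1%N]_(i < L) P i)%N ->
  least_sol P x k L y.
Proof.
move=> sol_y y_lt; split=> // y' sol_y'; rewrite leqNgt; apply/negP => lt_y'y.
have := dvdn_leq _ (crt_sol_sub_dvd sol_y sol_y' (ltnW lt_y'y)).
rewrite muln_gt0 subn_gt0 lt_y'y Pk_gt0 => /(_ isT) lcm_le.
have := leq_ltn_trans (leq_trans lcm_le _) y_lt.
by rewrite ltnn leq_mul2r leq_subr orbT => /(_ isT).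
Qed.
End LeastSolution.

Lemma divz_subn_modn (N m : nat) : (0 < m)%N ->
  ((N%:Z - (N %% m)%:Z) %/ m%:Z)%Z = (N %/ m)%:Z.
Proof.
move=> m_gt0; rewrite {1}(divn_eq N m) PoszD PoszM addrK.
by rewrite mulzK // eqz_nat -lt0n.
Qed.

Lemma intr_eq_divn (b c : int) (g : nat) : (0 < g)%N ->
  b%:~R = c%:~R / g%:R :> rat <-> c = b * g%:Z.
Proof.
move=> g_gt0; have gP : g%:R != 0 :> rat by rewrite pnatr_eq0 -lt0n.
split=> [bE | ->]; last by rewrite intrM mulfK.
by apply/eqP; rewrite -(eqr_int rat) intrM bE mulfVK.
Qed.

Theorem theorem1 (L : nat) (M : nat -> nat) (N : nat) (rt : nat -> nat) :
  (2 <= L)%N ->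
  (forall i, (i < L)%N -> (0 < M i)%N) ->
  (forall i j, (i < L)%N -> (j < L)%N -> i != j -> M i != M j) ->
  (N < \big[lcmn/1%N]_(i < L) M i)%N ->
  (forall i, (i < L)%N -> (rt i < M i)%N) ->
  let r := fun i => (N %% M i)%N in
  let n := fun i => ((N%:Z - (r i)%:Z) %/ (M i)%:Z)%Z in
  let dr := fun i => (rt i)%:Z - (r i)%:Z in
  alg_outputs_eq M (fun i => (rt i)%:Z) 0 L n <->
  (forall i, (1 <= i < L)%N ->
     - ((gcdn (M 0%N) (M i))%:R / 2) <= (dr i - dr 0%N)%:~R :> rat /\
     (dr i - dr 0%N)%:~R < ((gcdn (M 0%N) (M i))%:R / 2) :> rat).
Proof.
move=> L_ge2 M_gt0 _ N_lt _ r n dr.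
have L_gt0 : (0 < L)%N by apply: leq_trans L_ge2.
have M0_gt0 := M_gt0 0%N L_gt0.
have nE i : (i < L)%N -> n i = (N %/ M i)%:Z.
  by move=> iL; apply/divz_subn_modn/M_gt0.
have outE i y : (i < L)%N ->
    (n i)%:~R = ((y%:Z * (G_ki M 0 i)%:Z - qhat M (fun j => (rt j)%:Z) 0 i)%:~R
                 / (G_ik M 0 i)%:R : rat) <->
    qhat M (fun j => (rt j)%:Z) 0 i = y%:Z * (G_ki M 0 i)%:Z - n i * (G_ik M 0 i)%:Z.
  move=> iL; rewrite intr_eq_divn; last exact/G_ik_gt0/M_gt0.
  by split=> qE; [rewrite -qE | rewrite qE]; ring.
split=> [[y [_ [n0E nhatE]]] i /andP[i_gt0 iL] | dr_small].
- apply/(qhat_fold_diffP _ N _ i M0_gt0).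
  by rewrite -(nE 0%N) // -(nE i) // n0E; apply/(outE _ _ iL)/nhatE; rewrite -?lt0n.
- have qE i : (i < L)%N -> i != 0%N -> qhat M (fun j => (rt j)%:Z) 0 i =
      (N %/ M 0)%:Z * (G_ki M 0 i)%:Z - (N %/ M i)%:Z * (G_ik M 0 i)%:Z.
    move=> iL i_ne0; apply/(qhat_fold_diffP _ N _ i M0_gt0)/dr_small.
    by rewrite lt0n i_ne0.
  exists (N %/ M 0)%N; split; [apply: crt_sol_least => // | split].
  + by move=> i iL i_ne0; apply/xihat_fold_diff/qE.
  + by apply: leq_ltn_trans N_lt; rewrite leq_trunc_div.
  + exact: nE.
  + by move=> i iL i_ne0; apply/outE => //; rewrite qE // nE.
Qed.
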